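(* Let $n\ge 1$ and let $f:\{0,1\}^n\to\{0,1\}^n$. The map $G_f:\mathcal{X}\to\mathcal{X}$ is topologically transitive (with respect to the metric $d$) if and only if the asynchronous iteration graph $\Gamma(f)$ is strongly connected.
   Context: Write $\mathbb{B}=\{0,1\}$ and $\llbracket 1;n\rrbracket=\{1,\dots,n\}$. For $f=(f_1,\dots,f_n):\mathbb{B}^n\to\mathbb{B}^n$, define $F_f:\llbracket 1;n\rrbracket\times\mathbb{B}^n\to\mathbb{B}^n$ by $F_f(i,x)=(x_1,\dots,x_{i-1},f_i(x),x_{i+1},\dots,x_n)$. Let $\mathcal{X}=\llbracket 1;n\rrbracket^{\mathbb{N}}\times\mathbb{B}^n$ and define $G_f:\mathcal{X}\to\mathcal{X}$ by $G_f(s,x)=(\sigma(s),F_f(s_0,x))$, where $\sigma(s)_t=s_{t+1}$ for all $t\in\mathbb{N}$. The metric on $\mathcal{X}$ is $d((s,x),(s',x'))=\sum_{i=1}^n|x_i-x'_i|+\frac{9}{n}\sum_{t\in\mathbb{N}}\frac{|s_t-s'_t|}{10^{t+1}}$. $G_f$ is topologically transitive if for all $X,Y\in\mathcal{X}$ and all open balls $B_X,B_Y$ centered at $X$ and $Y$, there exist $X'\in B_X$ and $t\in\mathbb{N}$ with $G_f^t(X')\in B_Y$. The asynchronous iteration graph $\Gamma(f)$ is the directed graph with vertex set $\mathbb{B}^n$ containing, for every $x\in\mathbb{B}^n$ and every $i\in\llbracket 1;n\rrbracket$, an arc from $x$ to $F_f(i,x)$. *)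

From mathcomp Require Import all_boot.
From Stdlib Require Import Reals.
From Coquelicot Require Import Coquelicot.

Set Implicit Arguments.
Unset Strict Implicit.
Unset Printing Implicit Defensive.

(* B^n : boolean vectors indexed by 'I_n (index i : 'I_n stands for i+1). *)
Definition Bn (n : nat) := {ffun 'I_n -> bool}.

Definition Ff (n : nat) (f : Bn n -> Bn n) (i : 'I_n) (x : Bn n) : Bn n :=
  [ffun j => if j == i then f x j else x j].

(* Phase space X = [[1;n]]^N * B^n ; strategies take values in 'I_n
   (shifted by one, which does not affect |s_t - s'_t|). *)
Definition Xsp (n : nat) : Type := ((nat -> 'I_n) * Bn n)%type.

Definition Gf (n : nat) (f : Bn n -> Bn n) (X : Xsp n) : Xsp n :=
  (fun t => X.1 t.+1, Ff f (X.1 O) X.2).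

Definition dist (n : nat) (X Y : Xsp n) : R :=
  (\big[Rplus/0%R]_(i < n) Rabs (INR (X.2 i) - INR (Y.2 i))
   + (9 / INR n) * Series (fun t => Rabs (INR (X.1 t) - INR (Y.1 t)) / 10 ^ (t.+1)))%R.

Definition topologically_transitive (n : nat) (f : Bn n -> Bn n) : Prop :=
  forall (X Y : Xsp n) (rX rY : R), (0 < rX)%R -> (0 < rY)%R ->
    exists X' : Xsp n, (dist X X' < rX)%R /\
      exists t : nat, (dist Y (iter t (Gf f) X') < rY)%R.

Definition gamma_arc (n : nat) (f : Bn n -> Bn n) : rel (Bn n) :=
  fun x y => [exists i : 'I_n, Ff f i x == y].

Definition strongly_connected (n : nat) (f : Bn n -> Bn n) : Prop :=
  forall x y : Bn n, connect (gamma_arc f) x y.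

From Pilot Require Import Defs.
From HB Require Import structures.
From mathcomp Require Import all_boot.
From Stdlib Require Import Reals Lra FunctionalExtensionality.
From Coquelicot Require Import Coquelicot.

Set Implicit Arguments.
Unset Strict Implicit.
Unset Printing Implicit Defensive.

(* Two points at distance < 1 have the same state, so transitivity forces every
   state to reach every other one along arcs of Gamma(f).  Conversely, two
   strategies that agree on their first k terms are at distance at most
   18 / 5^k.  Hence, given X = (s, x) and Y = (s', y), keep a long prefix of s,
   append the labels of a path of Gamma(f) from the state it reaches to y, and
   continue with s': after prefix and path the orbit is exactly Y. *)

HB.instance Definition _ :=
  Monoid.isComLaw.Build R 0%R Rplus
    (fun a b c => esym (Rplus_assoc a b c)) Rplus_comm Rplus_0_l.

Lemma le_big_Rplus n (F : 'I_n -> R) j :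
  (forall i, 0 <= F i)%R -> (F j <= \big[Rplus/0%R]_(i < n) F i)%R.
Proof.
move=> F_ge0; rewrite (bigD1 j) //=.
have : (0 <= \big[Rplus/0%R]_(i < n | i != j) F i)%R.
  by apply: (big_ind (fun x => 0 <= x)%R) => // *; lra.
by move/(Rplus_le_compat_l (F j)); rewrite Rplus_0_r.
Qed.

Lemma ex_series_geom_half (C : R) : ex_series (fun t => C * (/2) ^ t)%R.
Proof.
apply: ex_series_scal_l; eexists; apply: is_series_geom.
rewrite Rabs_pos_eq; lra.
Qed.

Lemma Series_geom_half (C : R) : Series (fun t => C * (/2) ^ t)%R = (2 * C)%R.
Proof.
rewrite Series_scal_l (is_series_unique _ (/ (1 - /2))); first field.
apply: is_series_geom; rewrite Rabs_pos_eq; lra.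
Qed.

Lemma exists_div_pow5_lt (c r : R) : (0 < r)%R -> exists k, (c / 5 ^ k < r)%R.
Proof.
move=> r_gt0.
have c1_gt0 : (0 < Rabs c + 1)%R by have := Rabs_pos c; lra.
have fifth_lt1 : (Rabs (/5) < 1)%R by rewrite Rabs_pos_eq; lra.
have [k Hk] := pow_lt_1_zero _ fifth_lt1 _ (Rdiv_lt_0_compat _ _ r_gt0 c1_gt0).
exists k; have {Hk} := Hk k (Nat.le_refl k).
rewrite pow_inv Rabs_pos_eq; last by left; apply: Rinv_0_lt_compat; apply: pow_lt; lra.
move/(Rmult_lt_compat_l _ _ _ c1_gt0).
have -> : ((Rabs c + 1) * (r / (Rabs c + 1)) = r)%R by field; lra.
apply: Rle_lt_trans; apply: Rmult_le_compat_r.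
- by left; apply: Rinv_0_lt_compat; apply: pow_lt; lra.
- by have := Rle_abs c; lra.
Qed.

Section Metric.

Variable n : nat.
Hypothesis n_gt0 : (0 < n)%nat.

Definition strategy_term (s s' : nat -> 'I_n) t : R :=
  Rabs (INR (s t) - INR (s' t)) / 10 ^ t.+1.

Lemma strategy_term_ge0 s s' t : (0 <= strategy_term s s' t)%R.
Proof.
apply: Rdiv_le_0_compat; first exact: Rabs_pos.
by apply: pow_lt; lra.
Qed.

Lemma Rabs_INR_ord_sub (a b : 'I_n) : (Rabs (INR a - INR b) <= INR n)%R.
Proof.
have /lt_INR a_lt : (a < n)%coq_nat by apply/ltP.
have /lt_INR b_lt : (b < n)%coq_nat by apply/ltP.
by have := pos_INR a; have := pos_INR b; move=> *; apply: Rabs_le; lra.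
Qed.

(* [10^(t+1) = 10 * 5^t * 2^t]: the factor [5^t >= 5^k] provides the decay in k. *)
Lemma strategy_term_le s s' t k : (k <= t)%nat ->
  (strategy_term s s' t <= INR n / 5 ^ k * (/2) ^ t)%R.
Proof.
move=> le_kt; rewrite /strategy_term.
have -> : (10 ^ t.+1 = 10 * (5 ^ t * 2 ^ t))%R.
  by rewrite -Rpow_mult_distr; replace (5 * 2)%R with 10%R by lra.
have p5t : (0 < 5 ^ t)%R by apply: pow_lt; lra.
have p5k : (0 < 5 ^ k)%R by apply: pow_lt; lra.
have p2t : (0 < 2 ^ t)%R by apply: pow_lt; lra.
have le_5kt : (5 ^ k <= 5 ^ t)%R by apply: Rle_pow; [lra | apply/leP].
have := Rabs_INR_ord_sub (s t) (s' t); have := Rabs_pos (INR (s t) - INR (s' t)).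
move=> abs_ge0 abs_le; rewrite pow_inv.
apply: (Rle_trans _ (INR n / (5 ^ t * 2 ^ t))).
  rewrite /Rdiv; apply: Rmult_le_compat; try lra.
  - by left; apply: Rinv_0_lt_compat; nra.
  - by apply: Rinv_le_contravar; nra.
rewrite /Rdiv Rinv_mult Rmult_assoc; apply: Rmult_le_compat_l; first exact: pos_INR.
apply: Rmult_le_compat_r; first by left; apply: Rinv_0_lt_compat.
by apply: Rinv_le_contravar.
Qed.

Lemma ex_series_strategy_term s s' : ex_series (strategy_term s s').
Proof.
apply: (ex_series_le _ (fun t => INR n / 5 ^ 0 * (/2) ^ t)%R);
  last exact: ex_series_geom_half.
move=> t; rewrite /norm /= /abs /= Rabs_pos_eq; last exact: strategy_term_ge0.
exact: (strategy_term_le s s' (leq0n t)).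
Qed.

Lemma Series_strategy_term_ge0 s s' : (0 <= Series (strategy_term s s'))%R.
Proof.
apply: (Rle_trans _ (Series (fun t => 0 * (/2) ^ t)%R)).
  by rewrite Series_geom_half; lra.
apply: Series_le; last exact: ex_series_strategy_term.
by move=> t; rewrite Rmult_0_l; split; [lra | exact: strategy_term_ge0].
Qed.

Lemma dist_xx (X : Xsp n) : Defs.dist X X = 0%R.
Proof.
rewrite /Defs.dist big1; last by move=> i _; rewrite Rminus_diag Rabs_R0.
rewrite (Series_ext _ (fun t => 0 * (/2) ^ t)%R) ?Series_geom_half; first ring.
by move=> t; rewrite Rminus_diag Rabs_R0 /Rdiv !Rmult_0_l.
Qed.

Lemma dist_state_le (X Y : Xsp n) :
  (\big[Rplus/0%R]_(i < n) Rabs (INR (X.2 i) - INR (Y.2 i)) <= Defs.dist X Y)%R.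
Proof.
have n_pos : (0 < INR n)%R by apply: lt_0_INR; apply/ltP.
have coef_ge0 : (0 <= 9 / INR n)%R by apply: Rdiv_le_0_compat; lra.
have := Rmult_le_pos _ _ coef_ge0 (Series_strategy_term_ge0 X.1 Y.1).
rewrite /Defs.dist /strategy_term; lra.
Qed.

Lemma dist_lt1_state_eq (X Y : Xsp n) : (Defs.dist X Y < 1)%R -> X.2 = Y.2.
Proof.
move=> dist_lt1; apply/ffunP => i; apply/eqP/negPn/negP => neq_i.
have abs_ge1 : (1 <= Rabs (INR (X.2 i) - INR (Y.2 i)))%R.
  move: neq_i; case: (X.2 i); case: (Y.2 i) => //= _.
    by rewrite Rminus_0_r Rabs_R1; lra.
  by rewrite Rminus_0_l Rabs_Ropp Rabs_R1; lra.
have := @le_big_Rplus _ (fun j => Rabs (INR (X.2 j) - INR (Y.2 j))) i (fun j => Rabs_pos _).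
by have := dist_state_le X Y; lra.
Qed.

Lemma dist_eq_prefix_le k (s s' : nat -> 'I_n) (x : Bn n) :
  (forall t, (t < k)%nat -> s t = s' t) ->
  (Defs.dist (s, x) (s', x) <= 18 / 5 ^ k)%R.
Proof.
move=> eq_prefix.
rewrite /Defs.dist /= big1; last by move=> i _; rewrite Rminus_diag Rabs_R0.
have Series_le_geom : (Series (strategy_term s s') <= 2 * (INR n / 5 ^ k))%R.
  rewrite -Series_geom_half; apply: Series_le; last exact: ex_series_geom_half.
  move=> t; split; first exact: strategy_term_ge0.
  have [lt_tk | le_kt] := ltnP t k; last exact: strategy_term_le.
  rewrite /strategy_term eq_prefix // Rminus_diag Rabs_R0 /Rdiv Rmult_0_l.
  apply: Rmult_le_pos; last by apply: pow_le; lra.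
  apply: Rmult_le_pos; first exact: pos_INR.
  by left; apply: Rinv_0_lt_compat; apply: pow_lt; lra.
have n_pos : (0 < INR n)%R by apply: lt_0_INR; apply/ltP.
have p5k : (0 < 5 ^ k)%R by apply: pow_lt; lra.
have coef_ge0 : (0 <= 9 / INR n)%R by apply: Rdiv_le_0_compat; lra.
have := Rmult_le_compat_l _ _ _ coef_ge0 Series_le_geom.
have -> : (9 / INR n * (2 * (INR n / 5 ^ k)) = 18 / 5 ^ k)%R by field; lra.
by rewrite /strategy_term /=; lra.
Qed.

End Metric.

Section Dynamics.

Variables (n : nat) (f : Bn n -> Bn n).

Definition Ff_seq (x : Bn n) (l : seq 'I_n) : Bn n :=
  foldl (fun z i => Ff f i z) x l.

Definition prepend (p : seq 'I_n) (s : nat -> 'I_n) (t : nat) : 'I_n :=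
  if (t < size p)%nat then nth (s 0%nat) p t else s (t - size p)%nat.

Lemma connect_gammaP x y :
  connect (gamma_arc f) x y <-> exists l, Ff_seq x l = y.
Proof.
split; last first.
  move=> [l <-]; elim: l x => [|i l IH] x /=; first exact: connect0.
  apply: connect_trans (IH (Ff f i x)); apply: connect1.
  by apply/existsP; exists i.
move/connectP=> [p]; elim: p x => [|z p IH] x /=; first by move=> _ ->; exists [::].
move=> /andP[/existsP[i /eqP arc_i] path_p] last_p.
have [l <-] := IH z path_p last_p.
by exists (i :: l); rewrite /= arc_i.
Qed.

Lemma iter_Gf j s x :
  iter j (Gf f) (s, x) = (fun t => s (j + t)%nat, Ff_seq x (mkseq s j)).
Proof.
elim: j => [|j IH]; first by congr pair; apply: functional_extensionality.
rewrite iterS IH mkseqS /Gf /Ff_seq foldl_rcons /= addn0; congr pair.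
by apply: functional_extensionality => t; rewrite addnS addSn.
Qed.

Lemma iter_Gf_connect j (X : Xsp n) :
  connect (gamma_arc f) X.2 (iter j (Gf f) X).2.
Proof.
by case: X => s x; rewrite iter_Gf; apply/connect_gammaP; exists (mkseq s j).
Qed.

Lemma iter_Gf_prepend p s x :
  iter (size p) (Gf f) (prepend p s, x) = (s, Ff_seq x p).
Proof.
rewrite iter_Gf; congr pair.
  apply: functional_extensionality => t.
  by rewrite /prepend ltnNge leq_addr /= addKn.
congr Ff_seq; apply: (@eq_from_nth _ (s 0%nat)); rewrite size_mkseq // => t lt_t.
by rewrite nth_mkseq // /prepend lt_t.
Qed.

End Dynamics.

Theorem proposition1 (n : nat) (hn : (0 < n)%nat) (f : Bn n -> Bn n) :
  topologically_transitive f <-> strongly_connected f.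
Proof.
split.
- move=> transitive x y.
  pose s0 (_ : nat) := Ordinal hn.
  have [X' [near_x [t near_y]]] :=
    transitive (s0, x) (s0, y) 1%R 1%R Rlt_0_1 Rlt_0_1.
  have /= -> := dist_lt1_state_eq hn near_x.
  have /= -> := dist_lt1_state_eq hn near_y.
  exact: iter_Gf_connect.
- move=> connected [s x] [s' y] rX rY rX_gt0 rY_gt0.
  have [k small_k] := exists_div_pow5_lt 18 rX_gt0.
  have /connect_gammaP[l path_l] := connected (Ff_seq f x (mkseq s k)) y.
  exists (prepend (mkseq s k ++ l) s', x); split.
  + apply: Rle_lt_trans small_k; apply: dist_eq_prefix_le => // t lt_tk.
    rewrite /prepend nth_cat size_cat size_mkseq lt_tk ltn_addr //.
    by rewrite nth_mkseq.
  + exists (size (mkseq s k ++ l)).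
    by rewrite iter_Gf_prepend -path_l /Ff_seq foldl_cat dist_xx.
Qed.
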